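(* Let $n\ge1$, $p\in\{0,\dots,n\}$, $\mathcal{X}=\{x\in\{0,1\}^n:\sum_{i=1}^n x_i=p\}$, $\hat c\in\mathbb{R}^n_{\ge0}$, and for $\lambda\in[0,1]$ let $\mathcal{U}(\lambda)=\prod_{i=1}^n[(1-\lambda)\hat c_i,(1+\lambda)\hat c_i]$. For $x\in\mathcal{X}$ define \[ reg(x,\lambda)=\max_{c\in\mathcal{U}(\lambda)}\Big(c^tx-\min_{y\in\mathcal{X}}c^ty\Big),\qquad \lambda\in[0,1], \] and let $\overline{\Lambda}(x)\subseteq[0,1]$ be the set of changepoints (breakpoints) of the piecewise linear function $reg(x,\cdot)$. Then $|\overline{\Lambda}(x)|\in\mathcal{O}(\min\{p,n-p\})$ for every fixed $x\in\mathcal{X}$, and there is a set $\overline{\Lambda}\subseteq[0,1]$ with $|\overline{\Lambda}|\in\mathcal{O}(n^2)$ such that $\overline{\Lambda}(x)\subseteq\overline{\Lambda}$ for all $x\in\mathcal{X}$.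
   Context: For fixed $x$, $reg(x,\lambda)=\max_{y\in\mathcal{X}}\big((1+\lambda)\hat c^tx-\sum_i \hat c_i(1-\lambda+2\lambda x_i)y_i\big)$ is a maximum of finitely many affine functions of $\lambda$, hence piecewise linear; its changepoints are the values of $\lambda$ where the slope changes. *)

From HB Require Import structures.
From mathcomp Require Import all_boot all_order all_algebra.
From mathcomp Require Import all_classical all_reals.
Set Implicit Arguments. Unset Strict Implicit. Unset Printing Implicit Defensive.
Import Order.TTheory GRing.Theory Num.Theory.
Local Open Scope ring_scope.
Local Open Scope classical_set_scope.

Definition solset (n p : nat) : {set {ffun 'I_n -> bool}} :=
  [set x : {ffun 'I_n -> bool} | (\sum_(i < n) (x i : nat))%N == p].

Definition cost (R : realType) (n : nat) (c : 'I_n -> R) (x : {ffun 'I_n -> bool}) : R :=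
  \sum_(i < n) c i * (x i)%:R.

Definition Ubox (R : realType) (n : nat) (ch : 'I_n -> R) (l : R) : set ('I_n -> R) :=
  [set c | forall i, (1 - l) * ch i <= c i /\ c i <= (1 + l) * ch i].

(* min_{y in X} c^t y (X is finite and nonempty when p <= n). *)
Definition minval (R : realType) (n p : nat) (c : 'I_n -> R) : R :=
  inf [set cost c y | y in [set y | y \in solset n p]].

Definition reg (R : realType) (n p : nat) (ch : 'I_n -> R)
    (x : {ffun 'I_n -> bool}) (l : R) : R :=
  sup [set cost c x - minval p c | c in Ubox ch l].

Definition is_changepoint (R : realType) (f : R -> R) (l0 : R) : Prop :=
  (0 < l0 < 1) /\
  ~ (exists e a b : R, 0 < e /\ forall l, `|l - l0| < e -> f l = a * l + b).

From HB Require Import structures.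
From mathcomp Require Import all_boot all_order all_algebra.
From mathcomp Require Import all_classical all_reals ring lra.
Import Order.TTheory GRing.Theory Num.Theory.
Local Open Scope ring_scope.
Set Implicit Arguments. Unset Strict Implicit.

(* For c in U(l) and y in X, the gap c^t x - c^t y is largest when the items of
   x cost (1 + l) ch_i and all others (1 - l) ch_i; exchanging k items of x for
   k items outside x then gains at most (1 + l) (sum of the k largest ch_i in x)
   - (1 - l) (sum of the k smallest ch_i outside x), and this is attained.
   Pairing the t-th largest chosen cost a_t with the t-th smallest unchosen
   cost b_t, the t-th exchange contributes (a_t + b_t) l + (a_t - b_t), which
   is nonincreasing in t, so
     reg(x, l) = sum_(t < min(p, n - p)) max((a_t + b_t) l + (a_t - b_t), 0).
   A sum of positive parts of affine functions is locally affine except at a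
   zero of a term with nonzero slope, so every changepoint is one of the points
   (b_t - a_t) / (a_t + b_t), all of the form (ch_j - ch_i) / (ch_i + ch_j). *)

Lemma ler_sum_equicard (R : numDomainType) (I : finType) (f : I -> R) (A B : {set I}) :
  #|A| = #|B| -> (forall a b, a \in A -> b \in B -> f a <= f b) ->
  \sum_(i in A) f i <= \sum_(i in B) f i.
Proof.
move eA: #|A| => k; elim: k A B eA => [|k IH] A B cA cB fAB.
  move/eqP: cA; move/esym/eqP: cB; rewrite !cards_eq0 => /eqP-> /eqP->.
  by rewrite !big_set0.
have /set0Pn [a aA] : A != finset.set0 by rewrite -card_gt0 cA.
have /set0Pn [b bB] : B != finset.set0 by rewrite -card_gt0 -cB.
rewrite (big_setD1 a aA) (big_setD1 b bB) lerD ?fAB //.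
apply: IH => [||a' b' /setD1P[_ a'A] /setD1P[_ b'B]]; last exact: fAB.
- by move: cA; rewrite (cardsD1 a A) aA => -[].
- by move: cB; rewrite (cardsD1 b B) bB => -[].
Qed.

Lemma cardsD_sym (I : finType) (A B : {set I}) :
  (#|A :\: B| == #|B :\: A|) = (#|A| == #|B|).
Proof. by rewrite -(cardsID B A) -(cardsID A B) finset.setIC eqn_add2l. Qed.

Lemma setD_exchange (I : finType) (X T1 T2 : {set I}) :
  T1 \subset X -> T2 \subset ~: X ->
  X :\: ((X :\: T1) :|: T2) = T1 /\ ((X :\: T1) :|: T2) :\: X = T2.
Proof.
move=> /fintype.subsetP T1X /fintype.subsetP T2Xc.
split; apply/setP => i; move: (T1X i) (T2Xc i) => /implyP + /implyP; rewrite !inE;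
  by case: (i \in X); case: (i \in T1); case: (i \in T2).
Qed.

Lemma sum_uniq_set (R : nmodType) (I : finType) (F : I -> R) (s : seq I) :
  uniq s -> \sum_(i <- s) F i = \sum_(i in [set i in s]) F i.
Proof. by move=> us; rewrite big_uniq //; apply: eq_bigl => i; rewrite inE. Qed.

Lemma sumrB_setD (R : zmodType) (I : finType) (F : I -> R) (A B : {set I}) :
  \sum_(i in A) F i - \sum_(i in B) F i =
  \sum_(i in A :\: B) F i - \sum_(i in B :\: A) F i.
Proof.
rewrite (big_setID B) [X in _ - X](big_setID A) /= finset.setIC.
by rewrite opprD addrACA subrr add0r.
Qed.

Lemma ler_sum_sorted_take (R : numDomainType) (I : finType) (f : I -> R)
    (s : seq I) (S : {set I}) :
  uniq s -> sorted (fun i j => f j <= f i) s -> {subset S <= s} ->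
  \sum_(i in S) f i <= \sum_(i <- take #|S| s) f i.
Proof.
move=> us ss Ss; set k := #|S|; set T := [set i in take k s].
have ks : (k <= size s)%N.
  by rewrite -(card_uniqP us); apply/subset_leq_card/fintype.subsetP.
have cT : #|T| = k by rewrite cardsE (card_uniqP (take_uniq k us)) size_takel.
have headT : forall i j, i \in take k s -> j \in drop k s -> f j <= f i.
  have : pairwise (fun i j => f j <= f i) s.
    by rewrite -sorted_pairwise // => a b c hba hcb; apply: le_trans hcb hba.
  by rewrite -{1}(cat_take_drop k s) pairwise_cat => /and3P[/allrelP].
rewrite sum_uniq_set ?take_uniq //.
rewrite (big_setID T) [leRHS](big_setID S) /= finset.setIC lerD //.
apply: ler_sum_equicard => [|a b /setDP[aS aT] /setDP[bT bS]].
  by apply/eqP; rewrite cardsD_sym cT.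
apply: headT; first by rewrite inE in bT.
have := Ss a aS; rewrite -{1}(cat_take_drop k s) mem_cat => /orP[aTk|//].
by rewrite inE aTk in aT.
Qed.

Lemma sum_take_nth (R : nmodType) (T : Type) (F : T -> R) (s : seq T) (k : nat) :
  (k <= size s)%N -> \sum_(i <- take k s) F i = \sum_(0 <= t < k) nth 0 (map F s) t.
Proof.
move=> ks; rewrite -[LHS](big_map F xpredT id) (big_nth 0) size_map size_takel //.
by apply: eq_big_nat => t /andP[_ tk]; rewrite map_take nth_take.
Qed.

Lemma sup_eq_max (R : realType) (E : set R) (x : R) : E x -> ubound E x -> sup E = x.
Proof.
move=> Ex ubx; apply/le_anti/andP; split; first by apply: ge_sup; [exists x|].
by apply: ub_le_sup; [exists x|].
Qed.

Lemma inf_eq_min (R : realType) (E : set R) (x : R) : E x -> lbound E x -> inf E = x.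
Proof.
move=> Ex lbx; apply/le_anti/andP; split; last by apply: lb_le_inf; [exists x|].
by apply: ge_inf; [exists x|].
Qed.

Section PositivePartSums.
Variable R : realDomainType.
Implicit Types d : nat -> R.

Lemma ler_sum_prefix_max0 d (k m : nat) :
  (k <= m)%N -> \sum_(0 <= t < k) d t <= \sum_(0 <= t < m) Num.max (d t) 0.
Proof.
move=> km; rewrite (big_cat_nat (leq0n k) km) /= -[leLHS]addr0 lerD //.
  by apply: ler_sum => t _; rewrite le_max lexx.
by apply: sumr_ge0 => t _; rewrite le_max lexx orbT.
Qed.

Lemma sum_max0_eq_prefix d (m : nat) :
  (forall s t, (s <= t < m)%N -> d t <= d s) ->
  exists2 k, (k <= m)%N & \sum_(0 <= t < k) d t = \sum_(0 <= t < m) Num.max (d t) 0.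
Proof.
elim: m => [|m IH] d_noninc; first by exists 0%N; rewrite ?big_geq.
have [k km IHk] : exists2 k, (k <= m)%N &
    \sum_(0 <= t < k) d t = \sum_(0 <= t < m) Num.max (d t) 0.
  by apply: IH => s t /andP[st tm]; rewrite d_noninc // st ltnW.
rewrite big_nat_recr //=; have [dm_le0|dm_gt0] := leP (d m) 0.
  by exists k; [exact: leqW | rewrite IHk addr0].
exists m.+1 => //; rewrite big_nat_recr //=; congr (_ + _).
apply: eq_big_nat => t /andP[_ tm]; rewrite max_l //.
by rewrite (le_trans (ltW dm_gt0)) // d_noninc // (ltnW tm) ltnSn.
Qed.

End PositivePartSums.

Section AffineNear.
Variable R : realFieldType.
Implicit Types (f g : R -> R).

Definition affine_near f (l0 : R) :=
  exists e a b : R, 0 < e /\ forall l, `|l - l0| < e -> f l = a * l + b.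

Lemma affine_gt0_near (u w l0 : R) : 0 < u * l0 + w ->
  exists2 e : R, 0 < e & forall l, `|l - l0| < e -> 0 < u * l + w.
Proof.
move=> v_gt0; have nu_gt0 : 0 < `|u| + 1 by rewrite ltr_pwDr.
exists ((u * l0 + w) / (`|u| + 1)) => [|l]; first by rewrite divr_gt0.
rewrite ltr_pdivlMr // mulrDr mulr1 mulrC => dist_lt.
have : - (`|u| * `|l - l0|) <= u * (l - l0) by rewrite -normrM lerNnormlW.
have : u * (l - l0) = u * l - u * l0 by ring.
have : 0 <= `|l - l0| by [].
lra.
Qed.

Lemma affine_near_eq f g (l0 e : R) : 0 < e ->
  (forall l, `|l - l0| < e -> f l = g l) -> affine_near g l0 -> affine_near f l0.
Proof.
move=> e_gt0 fg [e' [a [b [e'_gt0 gE]]]]; exists (Num.min e e'), a, b.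
split=> [|l]; first by rewrite lt_min e_gt0.
by rewrite lt_min => /andP[le le']; rewrite fg // gE.
Qed.

Lemma affine_near_sum (I : eqType) (r : seq I) (F : I -> R -> R) (l0 : R) :
  {in r, forall i, affine_near (F i) l0} ->
  affine_near (fun l => \sum_(i <- r) F i l) l0.
Proof.
elim: r => [|i r IH] Faff.
  by exists 1, 0, 0; split=> // l _; rewrite big_nil mul0r addr0.
have [e1 [a1 [b1 [e1_gt0 E1]]]] := Faff i (mem_head i r).
have [e2 [a2 [b2 [e2_gt0 E2]]]] : affine_near (fun l => \sum_(j <- r) F j l) l0.
  by apply: IH => j jr; apply: Faff; rewrite inE jr orbT.
exists (Num.min e1 e2), (a1 + a2), (b1 + b2).
split=> [|l]; first by rewrite lt_min e1_gt0.
rewrite lt_min => /andP[l1 l2]; rewrite big_cons E1 // E2 //; ring.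
Qed.

Lemma affine_near_max0 (u w l0 : R) : (u * l0 + w = 0 -> u = 0) ->
  affine_near (fun l => Num.max (u * l + w) 0) l0.
Proof.
move=> flat_root; have [v_lt0|v_gt0|v_eq0] := ltgtP (u * l0 + w) 0.
- have [|e e_gt0 near_neg] := @affine_gt0_near (- u) (- w) l0; first lra.
  exists e, 0, 0; split=> // l /near_neg v_neg.
  by rewrite max_r ?mul0r ?addr0 //; lra.
- have [e e_gt0 near_pos] := affine_gt0_near v_gt0.
  by exists e, u, w; split=> // l /near_pos/ltW v_pos; rewrite max_l.
- have u0 := flat_root v_eq0; move: v_eq0; rewrite u0 mul0r add0r => w0.
  by exists 1, 0, 0; split=> // l _; rewrite w0 !mul0r addr0 maxxx.
Qed.

End AffineNear.

Lemma changepoint_sum_max0 (R : realType) (g : R -> R) (u w : nat -> R) (m : nat)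
    (l0 : R) :
  (forall l, 0 < l < 1 -> g l = \sum_(0 <= t < m) Num.max (u t * l + w t) 0) ->
  is_changepoint g l0 -> exists2 t, (t < m)%N & u t * l0 + w t = 0 /\ u t != 0.
Proof.
move=> gE [/andP[l0_gt0 l0_lt1] not_affine].
case: (pselect (exists2 t, (t < m)%N & u t * l0 + w t = 0 /\ u t != 0)) => // no_root.
exfalso; apply: not_affine; apply: (affine_near_eq (e := Num.min l0 (1 - l0))) => [|l|].
- by rewrite lt_min l0_gt0 subr_gt0.
- rewrite lt_min !ltr_norml => /andP[/andP[? _] /andP[_ ?]].
  by apply: gE; apply/andP; split; lra.
apply: affine_near_sum => t; rewrite mem_index_iota => /andP[_ tm].
apply: affine_near_max0 => root_t; apply/eqP/negPn/negP => slope_t.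
by apply: no_root; exists t.
Qed.

Definition chosen (n : nat) (x : {ffun 'I_n -> bool}) : {set 'I_n} := [set i | x i].

Lemma solsetE (n p : nat) (x : {ffun 'I_n -> bool}) :
  (x \in solset n p) = (#|chosen x| == p).
Proof.
rewrite inE; congr (_ == _); rewrite -sum1_card [RHS]big_mkcond /=.
by apply: eq_bigr => i _; rewrite inE; case: (x i).
Qed.

Lemma cost_chosen (R : realType) (n : nat) (c : 'I_n -> R) (x : {ffun 'I_n -> bool}) :
  cost c x = \sum_(i in chosen x) c i.
Proof.
rewrite /cost [RHS]big_mkcond /=; apply: eq_bigr => i _; rewrite inE.
by case: (x i); rewrite ?mulr1 ?mulr0.
Qed.

Section Swaps.
Variables (R : realType) (n : nat) (ch : 'I_n -> R).
Implicit Types (x y : {ffun 'I_n -> bool}) (l : R).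

Definition out_order x := sort (fun i j => ch j <= ch i) (enum (chosen x)).
Definition in_order x := sort (fun i j => ch i <= ch j) (enum (~: chosen x)).

Definition out_cost x t := nth 0 (map ch (out_order x)) t.
Definition in_cost x t := nth 0 (map ch (in_order x)) t.

Definition swap_gain x k l :=
  (1 + l) * \sum_(i <- take k (out_order x)) ch i
  - (1 - l) * \sum_(i <- take k (in_order x)) ch i.

Definition swap_slope x t := out_cost x t + in_cost x t.
Definition swap_offset x t := out_cost x t - in_cost x t.

Definition worst_cost x l (i : 'I_n) := if x i then (1 + l) * ch i else (1 - l) * ch i.

Lemma out_order_uniq x : uniq (out_order x).
Proof. by rewrite sort_uniq enum_uniq. Qed.

Lemma in_order_uniq x : uniq (in_order x).
Proof. by rewrite sort_uniq enum_uniq. Qed.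

Lemma mem_out_order x i : (i \in out_order x) = x i.
Proof. by rewrite mem_sort mem_enum inE. Qed.

Lemma mem_in_order x i : (i \in in_order x) = ~~ x i.
Proof. by rewrite mem_sort mem_enum !inE. Qed.

Lemma out_order_sorted x : sorted (fun i j => ch j <= ch i) (out_order x).
Proof. by apply: sort_sorted => i j; exact: le_total. Qed.

Lemma in_order_sorted x : sorted (fun i j => ch i <= ch j) (in_order x).
Proof. by apply: sort_sorted => i j; exact: le_total. Qed.

Lemma size_out_order x : size (out_order x) = #|chosen x|.
Proof. by rewrite size_sort -cardE. Qed.

Lemma card_chosenC x : #|~: chosen x| = (n - #|chosen x|)%N.
Proof. by rewrite cardsCs finset.setCK card_ord. Qed.

Lemma size_in_order x : size (in_order x) = (n - #|chosen x|)%N.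
Proof. by rewrite size_sort -cardE card_chosenC. Qed.

Lemma out_cost_nonincreasing x s t :
  (s <= t)%N -> (t < #|chosen x|)%N -> out_cost x t <= out_cost x s.
Proof.
move=> st tX; have ge_trans : transitive (fun a b : R => b <= a).
  by move=> a b c hba hcb; apply: le_trans hcb hba.
have sorted_out : sorted (fun a b : R => b <= a) (map ch (out_order x)).
  by rewrite sorted_map out_order_sorted.
apply: (sorted_leq_nth ge_trans (@lexx _ _) 0 sorted_out) => //.
all: by rewrite inE size_map size_out_order ?(leq_ltn_trans st).
Qed.

Lemma in_cost_nondecreasing x s t :
  (s <= t)%N -> (t < n - #|chosen x|)%N -> in_cost x s <= in_cost x t.
Proof.
move=> st tX; have sorted_in : sorted <=%R (map ch (in_order x)).
  by rewrite sorted_map in_order_sorted.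
apply: (sorted_leq_nth le_trans (@lexx _ _) 0 sorted_in) => //.
all: by rewrite inE size_map size_in_order ?(leq_ltn_trans st).
Qed.

Lemma out_cost_codom x t : (t < #|chosen x|)%N -> out_cost x t \in codom ch.
Proof.
rewrite /out_cost -size_out_order -(size_map ch) => /(mem_nth 0) /mapP[i _ ->].
exact: codom_f.
Qed.

Lemma in_cost_codom x t : (t < n - #|chosen x|)%N -> in_cost x t \in codom ch.
Proof.
rewrite /in_cost -size_in_order -(size_map ch) => /(mem_nth 0) /mapP[i _ ->].
exact: codom_f.
Qed.

Lemma swap_gainE x k l : (k <= #|chosen x|)%N -> (k <= n - #|chosen x|)%N ->
  swap_gain x k l = \sum_(0 <= t < k) (swap_slope x t * l + swap_offset x t).
Proof.
move=> kX kXc; rewrite /swap_gain !sum_take_nth ?size_out_order ?size_in_order //.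
rewrite !mulr_sumr -sumrB; apply: eq_bigr => t _.
by rewrite /swap_slope /swap_offset /out_cost /in_cost; ring.
Qed.

Lemma swap_term_nonincreasing x l s t : 0 <= l <= 1 -> (s <= t)%N ->
  (t < minn #|chosen x| (n - #|chosen x|))%N ->
  swap_slope x t * l + swap_offset x t <= swap_slope x s * l + swap_offset x s.
Proof.
move=> /andP[l_ge0 l_le1] st; rewrite leq_min => /andP[tX tXc].
have := out_cost_nonincreasing st tX; have := in_cost_nondecreasing st tXc.
rewrite /swap_slope /swap_offset; nra.
Qed.

Lemma ler_sum_out_order x (S : {set 'I_n}) : S \subset chosen x ->
  \sum_(i in S) ch i <= \sum_(i <- take #|S| (out_order x)) ch i.
Proof.
move=> /fintype.subsetP SX; apply: ler_sum_sorted_take.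
- exact: out_order_uniq.
- exact: out_order_sorted.
- by move=> i /SX; rewrite mem_out_order inE.
Qed.

Lemma ler_sum_in_order x (S : {set 'I_n}) : S \subset ~: chosen x ->
  \sum_(i <- take #|S| (in_order x)) ch i <= \sum_(i in S) ch i.
Proof.
move=> /fintype.subsetP SXc; rewrite -lerN2 -!sumrN; apply: ler_sum_sorted_take.
- exact: in_order_uniq.
- by apply: sub_sorted (in_order_sorted x) => i j /=; rewrite lerN2.
- by move=> i /SXc; rewrite mem_in_order !inE.
Qed.

Lemma cost_gap_le_swap_gain (p : nat) x y l (c : 'I_n -> R) :
  x \in solset n p -> y \in solset n p -> 0 <= l <= 1 -> Ubox ch l c ->
  exists2 k, (k <= minn p (n - p))%N & cost c x - cost c y <= swap_gain x k l.
Proof.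
rewrite !solsetE => /eqP cX /eqP cY /andP[l_ge0 l_le1] c_box.
set X := chosen x; set Y := chosen y.
have cD : #|Y :\: X| = #|X :\: Y| by apply/eqP; rewrite cardsD_sym cX cY.
have YXc : Y :\: X \subset ~: X by rewrite finset.setDE finset.subsetIr.
exists #|X :\: Y|.
  rewrite leq_min -{1}cX subset_leq_card ?subsetDl //=.
  by rewrite -cD -cX -card_chosenC subset_leq_card.
have out_le := ler_sum_out_order (subsetDl X Y).
have in_le := ler_sum_in_order YXc; rewrite cD in in_le.
have c_le : \sum_(i in X :\: Y) c i <= (1 + l) * \sum_(i in X :\: Y) ch i.
  by rewrite mulr_sumr; apply: ler_sum => i _; case: (c_box i).
have c_ge : (1 - l) * \sum_(i in Y :\: X) ch i <= \sum_(i in Y :\: X) c i.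
  by rewrite mulr_sumr; apply: ler_sum => i _; case: (c_box i).
rewrite !cost_chosen sumrB_setD /swap_gain; nra.
Qed.

Lemma worst_cost_Ubox x l :
  (forall i, 0 <= ch i) -> 0 <= l -> Ubox ch l (worst_cost x l).
Proof.
move=> ch_ge0 l_ge0 i; rewrite /worst_cost; have := ch_ge0 i.
by case: (x i); split; nra.
Qed.

Lemma swap_gain_attained (p : nat) x l k :
  x \in solset n p -> (k <= minn p (n - p))%N ->
  exists2 y, y \in solset n p &
    cost (worst_cost x l) x - cost (worst_cost x l) y = swap_gain x k l.
Proof.
rewrite solsetE => /eqP cX; rewrite leq_min => /andP[kX kXc].
set X := chosen x; set Tout := [set i in take k (out_order x)].
set Tin := [set i in take k (in_order x)].
have ToutX : Tout \subset X.
  by apply/fintype.subsetP => i; rewrite inE => /mem_take; rewrite mem_out_order inE.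
have TinXc : Tin \subset ~: X.
  by apply/fintype.subsetP => i; rewrite inE => /mem_take; rewrite mem_in_order !inE.
have cTout : #|Tout| = k.
  rewrite cardsE (card_uniqP (take_uniq _ (out_order_uniq x))).
  by rewrite size_takel // size_out_order cX.
have cTin : #|Tin| = k.
  rewrite cardsE (card_uniqP (take_uniq _ (in_order_uniq x))).
  by rewrite size_takel // size_in_order cX.
set Y := (X :\: Tout) :|: Tin.
have [XY YX] := setD_exchange ToutX TinXc; rewrite -/Y in XY YX.
have chosenY : chosen [ffun i => i \in Y] = Y by apply/setP => i; rewrite inE ffunE.
exists [ffun i => i \in Y].
  by rewrite solsetE chosenY -cX -cardsD_sym XY YX cTout cTin.
rewrite !cost_chosen chosenY sumrB_setD XY YX /swap_gain.
rewrite !sum_uniq_set ?take_uniq ?out_order_uniq ?in_order_uniq // !mulr_sumr.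
congr (_ - _); apply: eq_bigr => i iT; rewrite /worst_cost.
  by move: iT => /(fintype.subsetP ToutX); rewrite inE => ->.
by move: iT => /(fintype.subsetP TinXc); rewrite !inE => /negbTE ->.
Qed.

Lemma reg_sum_max0 (p : nat) x l :
  (forall i, 0 <= ch i) -> x \in solset n p -> 0 <= l <= 1 ->
  reg p ch x l =
    \sum_(0 <= t < minn p (n - p)) Num.max (swap_slope x t * l + swap_offset x t) 0.
Proof.
move=> ch_ge0 xX l01; set m := minn p (n - p); set V := \sum_(0 <= t < m) _.
have cX : #|chosen x| = p by apply/eqP; rewrite -solsetE.
have gainE k : (k <= m)%N ->
    swap_gain x k l = \sum_(0 <= t < k) (swap_slope x t * l + swap_offset x t).
  by rewrite leq_min -cX => /andP[]; apply: swap_gainE.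
have gain_le k : (k <= m)%N -> swap_gain x k l <= V.
  by move=> km; rewrite gainE // ler_sum_prefix_max0.
have [k km gain_eq] : exists2 k, (k <= m)%N & swap_gain x k l = V.
  have [|k km sumE] :=
    sum_max0_eq_prefix (d := fun t => swap_slope x t * l + swap_offset x t) (m := m).
    by move=> s t /andP[st tm]; apply: swap_term_nonincreasing; rewrite ?cX.
  by exists k; rewrite ?gainE.
have gap_le c : Ubox ch l c ->
    lbound [set cost c y | y in [set y | y \in solset n p]] (cost c x - V).
  move=> c_box _ [y yX <-].
  have [k' k'm gap] := cost_gap_le_swap_gain xX yX l01 c_box.
  by have := gain_le k' k'm; lra.
have [y yX y_gap] := swap_gain_attained l xX km.
have worst_box := worst_cost_Ubox x ch_ge0 (proj1 (andP l01)).
have worst_min : minval p (worst_cost x l) = cost (worst_cost x l) y.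
  apply: inf_eq_min; first by exists y.
  by move=> z /(gap_le _ worst_box); lra.
apply: sup_eq_max; first by exists (worst_cost x l); rewrite // worst_min y_gap.
move=> _ [c c_box <-]; have : cost c x - V <= minval p c.
  by apply: lb_le_inf; [exists (cost c x); exists x | exact: gap_le].
lra.
Qed.

Lemma changepoint_reg (p : nat) x l0 :
  (forall i, 0 <= ch i) -> x \in solset n p -> is_changepoint (reg p ch x) l0 ->
  exists2 t, (t < minn p (n - p))%N & l0 = - swap_offset x t / swap_slope x t.
Proof.
move=> ch_ge0 xX cp.
have [l l01|t tm [root slope]] :=
  changepoint_sum_max0 (u := swap_slope x) (w := swap_offset x) (m := minn p (n - p)) _ cp.
  by apply: reg_sum_max0 => //; case/andP: l01 => /ltW -> /ltW ->.
by exists t => //; apply: (mulIf slope); rewrite divfK //; lra.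
Qed.

End Swaps.

Theorem theorem4 (R : realType) :
  (exists C : nat, forall (n p : nat) (ch : 'I_n -> R) (x : {ffun 'I_n -> bool}),
      (0 < n)%N -> (p <= n)%N -> (forall i, 0 <= ch i) -> x \in solset n p ->
      exists s : seq R, (size s <= C * minn p (n - p))%N /\
        forall l : R, is_changepoint (reg p ch x) l -> l \in s)
  /\
  (exists C : nat, forall (n p : nat) (ch : 'I_n -> R),
      (0 < n)%N -> (p <= n)%N -> (forall i, 0 <= ch i) ->
      exists s : seq R, (size s <= C * n ^ 2)%N /\
        (forall l, l \in s -> 0 <= l <= 1) /\
        forall x : {ffun 'I_n -> bool}, x \in solset n p ->
          forall l : R, is_changepoint (reg p ch x) l -> l \in s).
Proof.
split; exists 1%N.
  move=> n p ch x _ _ ch_ge0 xX.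
  exists [seq - swap_offset ch x t / swap_slope ch x t | t <- iota 0 (minn p (n - p))].
  split=> [|l cp]; first by rewrite size_map size_iota mul1n.
  have [t tm ->] := changepoint_reg ch_ge0 xX cp.
  by apply: map_f; rewrite mem_iota.
move=> n p ch _ _ ch_ge0.
exists [seq l <- [seq - (a - b) / (a + b) | a <- codom ch, b <- codom ch] | 0 <= l <= 1].
split.
  rewrite mul1n -mulnn size_filter (leq_trans (count_size _ _)) //.
  by rewrite size_allpairs size_codom card_ord.
split=> [l|x xX l cp]; first by rewrite mem_filter => /andP[].
have [/andP[l_gt0 l_lt1] _] := cp.
have cX : #|chosen x| = p by apply/eqP; rewrite -solsetE.
have [t tm l_root] := changepoint_reg ch_ge0 xX cp.
move: tm; rewrite leq_min -cX => /andP[tX tXc].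
rewrite mem_filter !ltW //= l_root.
by apply: allpairs_f; [apply: out_cost_codom | apply: in_cost_codom].
Qed.
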